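(* There exists $\varepsilon_0>0$ such that for every $\varepsilon\in(0,\varepsilon_0)$ there exist constants $0<c\le C<\infty$ depending only on $\varepsilon$ such that for all $z\in\mathbb C$ with $|z|\le1-\varepsilon$ and all $\xi\in\mathbb C^+$ with $|\xi|\le\varepsilon^{-1}$, $c\le|\tilde m_\infty(\xi)|\le C$.
   Context: $\mathbb C^+=\{\operatorname{Im}\xi>0\}$. For $z\in\mathbb C$, $\tilde m_\infty(\xi)=\int\frac{d\nu(x)}{\xi-x}$ is the Stieltjes transform of the unique symmetric probability measure $\nu$ on $\mathbb R$ (depending on $z$) such that $\tilde m_\infty(\xi)(\xi-\tilde m_\infty(\xi))^2+\tilde m_\infty(\xi)(1-|z|^2)-\xi=0$ for all $\xi\in\mathbb C^+$; equivalently, $\nu$ is the limiting symmetrized empirical distribution of the singular values of $zI_n-A_n/\sqrt n$ for $A_n$ with i.i.d. standard Gaussian entries. *)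

From mathcomp Require Import all_boot all_order all_algebra.
From mathcomp Require Import all_classical all_reals all_analysis.
From mathcomp Require Import complex.
Set Implicit Arguments. Unset Strict Implicit. Unset Printing Implicit Defensive.
Import Order.TTheory GRing.Theory Num.Theory.
Local Open Scope ring_scope.
Local Open Scope complex_scope.
Local Open Scope classical_set_scope.

(* Stieltjes transform  S_nu(xi) = \int dnu(x) / (xi - x), written out via
   1/(xi - x) = ((a - x) - i b) / ((a - x)^2 + b^2) for xi = a + i b. *)
Definition stieltjes (R : realType) (nu : probability R R) (xi : R[i]) : R[i] :=
  let a := complex.Re xi in
  let b := complex.Im xi in
  (fine (\int[nu]_x ((a - x) / ((a - x) ^+ 2 + b ^+ 2))%:E)%E)
  +i* (fine (\int[nu]_x (- b / ((a - x) ^+ 2 + b ^+ 2))%:E)%E).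

Definition symmetric_measure (R : realType) (nu : probability R R) : Prop :=
  forall A : set R, measurable A -> nu ((fun x : R => - x) @^-1` A) = nu A.

Definition is_nu_z (R : realType) (z : R[i]) (nu : probability R R) : Prop :=
  symmetric_measure nu /\
  forall xi : R[i], 0 < complex.Im xi ->
    let m := stieltjes nu xi in
    m * (xi - m) ^+ 2 + m * (1 - `|z| ^+ 2) - xi = 0.

From mathcomp Require Import all_boot all_order all_algebra.
From mathcomp Require Import all_classical all_reals all_analysis.
From mathcomp Require Import complex.
From mathcomp Require Import ring lra.
Import Order.TTheory GRing.Theory Num.Theory.
Local Open Scope ring_scope.
Local Open Scope complex_scope.

(* The equation says that m = m_infty(xi) is a root of the cubic
   m ((xi - m)^2 + a) = xi with a = 1 - |z|^2 in [eps, 1].  Expanding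
   m^3 = 2 xi m^2 - (xi^2 + a) m + xi bounds |m| above in terms of |xi|, and
   |xi| <= |m| ((|xi| + |m|)^2 + a) bounds |m| below once |xi| is not small.
   When both |xi| and |m| are small, the imaginary part of the cubic has a sign:
   it is a combination of Im m <= 0 (a Stieltjes transform maps the upper half
   plane to the lower one) and Im xi > 0 whose coefficients are close to a > 0
   and -1, so the cubic cannot vanish. *)

Section CubicNorm.
Context {F : numDomainType} {a xi m : F}.
Hypothesis cubic_m : m * ((xi - m) ^+ 2 + a) = xi.

Lemma cubic_norm_le :
  `|m| ^+ 3 <= 2 * `|xi| * `|m| ^+ 2 + (`|xi| ^+ 2 + `|a|) * `|m| + `|xi|.
Proof.
rewrite -[`|m| ^+ 3]normrX.
have -> : m ^+ 3 = 2 * xi * m ^+ 2 - (xi ^+ 2 + a) * m + xi.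
  by rewrite -{3}cubic_m; ring.
apply: (le_trans (ler_normD _ _)); rewrite lerD2r.
apply: (le_trans (ler_normB _ _)); rewrite !normrM -expr2 normr_nat.
by rewrite lerD2l ler_wpM2r // (le_trans (ler_normD _ _)) // normrX.
Qed.

Lemma norm_le_cubic : `|xi| <= `|m| * ((`|xi| + `|m|) ^+ 2 + `|a|).
Proof.
rewrite -{1}cubic_m normrM ler_wpM2l // (le_trans (ler_normD _ _)) // lerD2r.
by rewrite normrX lerXn2r ?nnegrE ?addr_ge0 // ler_normB.
Qed.

End CubicNorm.

Lemma cubic_root_le {R : realFieldType} {s t a : R} :
  0 <= s -> 0 <= t -> a <= 1 ->
  s ^+ 3 <= 2 * t * s ^+ 2 + (t ^+ 2 + a) * s + t -> s <= t ^+ 2 + 3 * t + 2.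
Proof.
move=> s0 t0 a1 hs; have [s1|s1] := lerP s 1; first by nra.
suff : s * s ^+ 2 <= (t ^+ 2 + 3 * t + 1) * s ^+ 2.
  by rewrite ler_pM2r; nra.
have ss : s <= s ^+ 2 by nra.
have : (t ^+ 2 + a) * s <= (t ^+ 2 + 1) * s ^+ 2 by nra.
have : t <= t * s ^+ 2 by nra.
by rewrite -exprS; lra.
Qed.

Section ComplexCubic.
Context {R : rcfType}.
Implicit Types (a eps u v p q : R) (m xi x : R[i]).

Lemma Im_cubic a u v p q :
  complex.Im ((u +i* v) * (((p +i* q) - (u +i* v)) ^+ 2 + a%:C)) =
  v * (p ^+ 2 - q ^+ 2 - 4 * u * p + 3 * u ^+ 2 - v ^+ 2 + a) +
  q * (2 * u * p - 2 * u ^+ 2 + 2 * v ^+ 2).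
Proof. by rewrite /= !expr2 /=; ring. Qed.

Lemma Im_cubic_lt a m xi : 0 < a <= 1 ->
  `|m| <= (a / 4)%:C -> `|xi| <= (a / 4)%:C ->
  complex.Im m <= 0 -> 0 < complex.Im xi ->
  complex.Im (m * ((xi - m) ^+ 2 + a%:C)) < complex.Im xi.
Proof.
move=> /andP[a0 a1] hm hxi.
have sqr_small x : `|x| <= (a / 4)%:C ->
    complex.Re x ^+ 2 + complex.Im x ^+ 2 <= (a / 4) ^+ 2.
  move=> hx; rewrite -lecR add_Re2_Im2 rmorphXn.
  by apply: lerXn2r; rewrite // nnegrE ler0c divr_ge0 // ltW.
move: (sqr_small _ hm) (sqr_small _ hxi).
case: m {hm} => u v; case: xi {hxi} => p q; rewrite Im_cubic /= => hm hxi v0 q0.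
have hup : 2 * u * p <= u ^+ 2 + p ^+ 2.
  by have := sqr_ge0 (u - p); rewrite sqrrB; lra.
have coef_v_ge0 : 0 <= p ^+ 2 - q ^+ 2 - 4 * u * p + 3 * u ^+ 2 - v ^+ 2 + a by nra.
have coef_q_lt1 : 2 * u * p - 2 * u ^+ 2 + 2 * v ^+ 2 < 1 by nra.
by nra.
Qed.

Lemma normc_real x : exists2 s, `|x| = s%:C & 0 <= s.
Proof. by exists (complex.Re `|x|); rewrite normc_def //= sqrtr_ge0. Qed.

Lemma cubic_root_norm_bounds eps a m xi :
  0 < eps < 1 -> eps <= a <= 1 ->
  complex.Im m <= 0 -> 0 < complex.Im xi -> `|xi| <= (eps^-1)%:C ->
  m * ((xi - m) ^+ 2 + a%:C) = xi ->
  (eps / 4 / ((eps^-1 + 1) ^+ 2 + 1))%:C <= `|m|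
    <= (eps^-1 ^+ 2 + 3 * eps^-1 + 2)%:C.
Proof.
move=> /andP[e0 e1] /andP[ea a1] v0 q0 hxi cubic_m.
have [[s ns s0] [t nt t0]] := (normc_real m, normc_real xi).
have na : `|a%:C| = a%:C by rewrite ger0_norm // ler0c; lra.
have upper : s ^+ 3 <= 2 * t * s ^+ 2 + (t ^+ 2 + a) * s + t.
  move: (cubic_norm_le cubic_m); rewrite ns nt na => H.
  by rewrite -lecR !(rmorphXn, rmorphD, rmorphM, rmorph_nat).
have lower : t <= s * ((t + s) ^+ 2 + a).
  move: (norm_le_cubic cubic_m); rewrite ns nt na => H.
  by rewrite -lecR !(rmorphXn, rmorphD, rmorphM).
move: hxi; rewrite nt ns !lecR => tE.
have E1 : 1 < eps^-1 by rewrite invf_gt1.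
apply/andP; split; last first.
  by have := cubic_root_le s0 t0 a1 upper; nra.
set K := (eps^-1 + 1) ^+ 2 + 1.
have K1 : 1 <= K by rewrite /K; nra.
have c_le : eps / 4 / K <= eps / 4 by rewrite ler_pdivrMr; nra.
have [s_big|s_small] := lerP (eps / 4) s; first exact: le_trans c_le s_big.
have [t_big|t_small] := lerP (eps / 4) t; last first.
  have : complex.Im (m * ((xi - m) ^+ 2 + a%:C)) < complex.Im xi.
    apply: Im_cubic_lt => //; first by apply/andP; split; lra.
      by rewrite ns lecR; lra.
    by rewrite nt lecR; lra.
  by rewrite cubic_m ltxx.
rewrite ler_pdivrMr; last lra.
apply: (le_trans t_big); apply: (le_trans lower); apply: ler_wpM2l => //.
by rewrite /K; nra.
Qed.

End ComplexCubic.

Lemma Im_stieltjes_le0 (R : realType) (nu : probability R R) (xi : R[i]) :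
  0 < complex.Im xi -> complex.Im (stieltjes nu xi) <= 0.
Proof.
set a := complex.Re xi; set b := complex.Im xi => b0.
have kernel_ge0 x : (0 <= (b / ((a - x) ^+ 2 + b ^+ 2))%:E)%E.
  by rewrite lee_fin divr_ge0 ?addr_ge0 ?sqr_ge0 ?ltW.
apply: fine_le0; under eq_integral do rewrite mulNr EFinN.
by rewrite integral_ge0N // oppe_le0 integral_ge0.
Qed.

Theorem lemma7p8 (R : realType) :
  exists eps0 : R, 0 < eps0 /\
  forall eps : R, 0 < eps < eps0 ->
  exists c C : R, 0 < c /\ c <= C /\
  forall (z xi : R[i]) (nu : probability R R),
    `|z| <= (1 - eps)%:C ->
    0 < complex.Im xi ->
    `|xi| <= (eps^-1)%:C ->
    is_nu_z z nu ->
    c%:C <= `|stieltjes nu xi| <= C%:C.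
Proof.
exists 1; split => // eps eps01; have /andP[e0 e1] := eps01.
have E1 : 1 < eps^-1 by rewrite invf_gt1.
exists (eps / 4 / ((eps^-1 + 1) ^+ 2 + 1)), (eps^-1 ^+ 2 + 3 * eps^-1 + 2).
split; first by rewrite !divr_gt0 //; nra.
split; first by rewrite ler_pdivrMr; nra.
move=> z xi nu hz q0 hxi [_ nu_cubic].
have [nz nzE nz0] := normc_real z; move: hz; rewrite nzE lecR => hz.
apply: (cubic_root_norm_bounds _ (1 - nz ^+ 2) _ xi) => //.
- by apply/andP; split; nra.
- exact: Im_stieltjes_le0.
- have /= := nu_cubic xi q0; rewrite nzE => cubic.
  apply/eqP; rewrite -subr_eq0 mulrDr rmorphB rmorph1 rmorphXn.
  exact/eqP.
Qed.
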